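(* Let $M$ and $M'$ be two stable matchings in an instance $I$ of SPA-S, and let $M^\lor$ be the assignment defined from $M,M'$ in the context. Then $M^\lor$ is a stable matching.
   Context: An instance $I$ of SPA-S consists of a finite set $\mathcal{S}$ of students, a finite set $\mathcal{P}$ of projects and a finite set $\mathcal{L}$ of lecturers. Each student $s_i$ ranks a subset $A_i\subseteq\mathcal{P}$ (its acceptable projects) in strict order. Each project is offered by exactly one lecturer; lecturer $l_k$ offers a nonempty set $P_k\subseteq\mathcal{P}$, the $P_k$ partitioning $\mathcal{P}$. Each lecturer $l_k$ ranks in strict order the students who find at least one project of $P_k$ acceptable. Projects have capacities $c_j\in\mathbb{Z}^+$, lecturers have capacities $d_k\in\mathbb{Z}^+$ with $\max\{c_j:p_j\in P_k\}\le d_k\le\sum\{c_j:p_j\in P_k\}$. A pair $(s_i,p_j)$, $p_j$ offered by $l_k$, is acceptable if $p_j\in A_i$ and $s_i$ is on $l_k$'s list. A matching $M$ is a set of acceptable pairs with each student in at most one pair, $|M(p_j)|\le c_j$, $|M(l_k)|\le d_k$, where for an assignment $M$ (a set of acceptable pairs), $M(s_i)$, $M(p_j)$, $M(l_k)$ denote the project of $s_i$, the students assigned to $p_j$, and the students assigned to projects of $l_k$. Undersubscribed/full means fewer than/exactly capacity many assigned students. An acceptable pair $(s_i,p_j)\notin M$ ($p_j$ offered by $l_k$) blocks $M$ if ($s_i$ is unassigned or prefers $p_j$ to $M(s_i)$) and one of: (P1) $p_j$ and $l_k$ undersubscribed; (P2) $p_j$ undersubscribed, $l_k$ full, $s_i\in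 M(l_k)$; (P3) $p_j$ undersubscribed, $l_k$ full, $l_k$ prefers $s_i$ to the worst student of $M(l_k)$; (P4) $p_j$ full and $l_k$ prefers $s_i$ to the worst student of $M(p_j)$. $M$ is stable if it is a matching with no blocking pair. Given stable matchings $M,M'$, $M^\lor$ is the assignment in which each student unassigned in both $M$ and $M'$ is unassigned, each student assigned to the same project in both is assigned to that project, and every other student is assigned to the worse (in her preference) of her projects in $M$ and $M'$. *)

From mathcomp Require Import all_boot.
Set Implicit Arguments.
Unset Strict Implicit.
Unset Printing Implicit Defensive.

Record SPAS (S P L : finType) := mkSPAS {
  offerer : P -> L;
  spref   : S -> seq P;
  lpref   : L -> seq S;
  pcap    : P -> nat;
  lcap    : L -> nat
}.

Section Defs.
Variables (S P L : finType) (I : SPAS S P L).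

Definition offers (l : L) : {set P} := [set p | offerer I p == l].

Definition wf_SPAS : Prop :=
  [/\ (forall s, uniq (spref I s)),
      (forall l, uniq (lpref I l)),
      (forall l s, (s \in lpref I l) =
                   has (fun p => offerer I p == l) (spref I s)),
      (forall l, offers l != set0) &
      [/\ (forall p, 0 < pcap I p),
      (forall l, 0 < lcap I l) &
      (forall l, (\max_(p in offers l) pcap I p <= lcap I l)
                 /\ (lcap I l <= \sum_(p in offers l) pcap I p))]].

Definition sprefers (s : S) (p q : P) : bool :=
  index p (spref I s) < index q (spref I s).

Definition lprefers (l : L) (s t : S) : bool :=
  index s (lpref I l) < index t (lpref I l).

Definition acceptable (s : S) (p : P) : bool :=
  (p \in spref I s) && (s \in lpref I (offerer I p)).

Implicit Type M : {set S * P}.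

Definition Ms M (s : S) : option P := [pick p | (s, p) \in M].
Definition Mp M (p : P) : {set S} := [set s | (s, p) \in M].
Definition Ml M (l : L) : {set S} :=
  [set s | [exists p, ((s, p) \in M) && (offerer I p == l)]].

Definition matching M : Prop :=
  [/\ (forall x, x \in M -> acceptable x.1 x.2),
      (forall s, #|[set p | (s, p) \in M]| <= 1),
      (forall p, #|Mp M p| <= pcap I p) &
      (forall l, #|Ml M l| <= lcap I l)].

Definition worst (l : L) (A : {set S}) : option S :=
  [pick w in A | [forall t in A, index t (lpref I l) <= index w (lpref I l)]].

Definition prefers_to_worst (l : L) (s : S) (A : {set S}) : bool :=
  if worst l A is Some w then lprefers l s w else false.

Definition blocks M (s : S) (p : P) : bool :=
  let l := offerer I p in
  [&& acceptable s p, (s, p) \notin M,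
      (if Ms M s is Some q then sprefers s p q else true) &
      [|| (#|Mp M p| < pcap I p) && (#|Ml M l| < lcap I l)
        , [&& #|Mp M p| < pcap I p, #|Ml M l| == lcap I l & s \in Ml M l]
        , [&& #|Mp M p| < pcap I p, #|Ml M l| == lcap I l &
              prefers_to_worst l s (Ml M l)]
        | (#|Mp M p| == pcap I p) && prefers_to_worst l s (Mp M p)]].

Definition stable M : Prop := matching M /\ forall s p, ~~ blocks M s p.

(* M^\lor : each student gets the worse of her projects in M and M' *)
Definition vee_student M M' (s : S) : option P :=
  match Ms M s, Ms M' s with
  | Some p, Some q => Some (if sprefers s p q then q else p)
  | Some p, None => Some p
  | None, Some q => Some q
  | None, None => None
  end.

Definition join M M' : {set S * P} :=
  [set x | vee_student M M' x.1 == Some x.2].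

End Defs.

(* Write a matching as the function s |-> M(s) and call s an improver when she
   prefers M(s) to M'(s).  Since M' is stable, an improver is outranked in M' at
   her project of M.  Counting lecturer by lecturer then shows that improvers
   take the same number of places of every lecturer in M and in M'; hence they
   are all assigned in M', and no project is used both by improvers and by
   students preferring M'.  So M^\lor fills each project as M or as M' does,
   fills each lecturer as M does, and every student it gives to a lecturer l is
   ranked by l above any student whom l ranks below all its students in M (or
   in M').  A pair blocking M^\lor would therefore block M or M'. *)

From mathcomp Require Import all_boot zify.
Set Implicit Arguments.
Unset Strict Implicit.
Unset Printing Implicit Defensive.

Lemma sum_card_fibres (T U : finType) (g : T -> option U) (Q : pred U) (A : {set T}) :
  \sum_(y | Q y) #|[set x in A | g x == Some y]| =
  #|[set x in A | if g x is Some y then Q y else false]|.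
Proof.
under eq_bigr do rewrite -sum1dep_card big_mkcond /=.
rewrite exchange_big -sum1dep_card [RHS]big_mkcond; apply: eq_bigr => x _ /=.
case: (x \in A) => /=; last by rewrite big1.
case: (g x) => [y|]; last by rewrite big1.
rewrite big_mkcond (bigD1 y) //= eqxx big1 ?addn0 ?if_same // => z.
by rewrite eq_sym (inj_eq (@Some_inj _)) => /negbTE->; rewrite if_same.
Qed.

Lemma leq_sum_eq (T : finType) (Q : pred T) (f g : T -> nat) :
  (forall t, Q t -> f t <= g t) -> \sum_(t | Q t) g t <= \sum_(t | Q t) f t ->
  forall t, Q t -> f t = g t.
Proof.
move=> le_fg le_sum; have [_] := leqif_sum (fun t Qt => leqif_eq (le_fg t Qt)).
rewrite eqn_leq le_sum (leq_sum _ le_fg) => /esym/forall_inP eq_fg t Qt.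
exact/eqP/eq_fg.
Qed.

Section Assignments.
Variables (S P L : finType) (I : SPAS S P L).
Local Notation lect := (offerer I).
Implicit Types (f m n : S -> option P) (s t : S) (p : P) (l : L) (X : {set S}).

Definition rank l s := index s (lpref I l).
Definition pstudents f p := [set s | f s == Some p].
Definition lstudents f l := [set s | omap lect (f s) == Some l].
Definition sprefers_opt s p (o : option P) :=
  if o is Some q then sprefers I s p q else true.

(* [(s, p)] cannot block [f] because [p], or else the lecturer of [p], is full
   with students the lecturer ranks above [s]. *)
Definition outranked f s p :=
  let l := lect p in
  (#|pstudents f p| = pcap I p /\ {in pstudents f p, forall t, rank l t < rank l s}) \/
  [/\ #|pstudents f p| < pcap I p, #|lstudents f l| = lcap I l, s \notin lstudents f l &
      {in lstudents f l, forall t, rank l t < rank l s}].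

Record stable_fun f : Prop := StableFun {
  stable_acceptable : forall s p, f s = Some p -> acceptable I s p;
  stable_pcap : forall p, #|pstudents f p| <= pcap I p;
  stable_lcap : forall l, #|lstudents f l| <= lcap I l;
  stable_outranked : forall s p, acceptable I s p -> f s <> Some p ->
    sprefers_opt s p (f s) -> outranked f s p }.

Definition better_off m n s : bool :=
  match m s, n s with
  | Some p, Some q => sprefers I s p q
  | Some _, None => true
  | _, _ => false
  end.

Definition join_fun m n s := if better_off m n s then n s else m s.

Definition hosts_improver m n p :=
  [exists s, better_off m n s && ((m s == Some p) || (n s == Some p))].

Lemma in_pstudents f p s : (s \in pstudents f p) = (f s == Some p).
Proof. by rewrite inE. Qed.

Lemma in_lstudents f l s : (s \in lstudents f l) = (omap lect (f s) == Some l).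
Proof. by rewrite inE. Qed.

Lemma pstudents_lstudents f p s : s \in pstudents f p -> s \in lstudents f (lect p).
Proof. by rewrite !inE => /eqP ->. Qed.

Lemma eq_pstudents f g p : f =1 g -> pstudents f p = pstudents g p.
Proof. by move=> eq_fg; apply/setP => s; rewrite !inE eq_fg. Qed.

Lemma eq_lstudents f g l : f =1 g -> lstudents f l = lstudents g l.
Proof. by move=> eq_fg; apply/setP => s; rewrite !inE eq_fg. Qed.

Lemma eq_outranked f g s p : f =1 g -> outranked f s p = outranked g s p.
Proof. by move=> eq_fg; rewrite /outranked (eq_pstudents p eq_fg) (eq_lstudents _ eq_fg). Qed.

Lemma rank_inj l s t : s \in lpref I l -> rank l t = rank l s -> t = s.
Proof.
rewrite /rank => s_l eq_ts.
have t_l : t \in lpref I l by rewrite -index_mem eq_ts index_mem.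
by rewrite -(nth_index s t_l) eq_ts nth_index.
Qed.

Lemma outranked_pstudents f s p :
  outranked f s p -> {in pstudents f p, forall t, rank (lect p) t < rank (lect p) s}.
Proof.
case=> [[_ above] | [_ _ _ above]] t t_p; first exact: above.
exact/above/pstudents_lstudents.
Qed.

Lemma outranked_lfull f s p : outranked f s p -> #|pstudents f p| < pcap I p ->
  [/\ #|lstudents f (lect p)| = lcap I (lect p), s \notin lstudents f (lect p) &
      {in lstudents f (lect p), forall t, rank (lect p) t < rank (lect p) s}].
Proof. by case=> [[-> _] | []//]; rewrite ltnn. Qed.

Lemma outranked_of_lfull f s p : #|pstudents f p| <= pcap I p ->
  #|lstudents f (lect p)| = lcap I (lect p) -> s \notin lstudents f (lect p) ->
  {in lstudents f (lect p), forall t, rank (lect p) t < rank (lect p) s} ->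
  outranked f s p.
Proof.
rewrite leq_eqVlt => /orP[/eqP full | under] lfull s_l above; last by right.
by left; split=> // t /pstudents_lstudents; apply: above.
Qed.

Lemma card_lstudentsI f l X :
  #|lstudents f l :&: X| = \sum_(p | lect p == l) #|pstudents f p :&: X|.
Proof.
under eq_bigr => p _ do rewrite setIC -[_ :&: _]setIdE.
rewrite (sum_card_fibres f) setIC -setIdE; apply: eq_card => s; rewrite !inE.
by case: (f s).
Qed.

Lemma card_lstudentsD f l X :
  #|lstudents f l :\: X| = \sum_(p | lect p == l) #|pstudents f p :\: X|.
Proof. by rewrite setDE card_lstudentsI; under eq_bigr do rewrite -setDE. Qed.

Lemma sum_card_lstudentsI f X :
  \sum_l #|lstudents f l :&: X| = #|[set s in X | f s != None]|.
Proof.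
under eq_bigr => l _ do rewrite setIC -[_ :&: _]setIdE.
rewrite (sum_card_fibres (fun s => omap lect (f s))); apply: eq_card => s.
by rewrite !inE; case: (f s).
Qed.

Lemma pstudents_join m n p :
  ~~ hosts_improver m n p -> pstudents (join_fun m n) p = pstudents m p.
Proof.
move=> no_improver; apply/setP=> s; rewrite !inE /join_fun; case: ifP => // better.
have /norP[/negbTE -> /negbTE ->] // : ~~ ((m s == Some p) || (n s == Some p)).
by apply: contra no_improver => s_p; apply/existsP; exists s; rewrite better.
Qed.

End Assignments.

Section BetterOff.
Variables (S P L : finType) (I : SPAS S P L) (m n : S -> option P).
Hypotheses (stable_m : stable_fun I m) (stable_n : stable_fun I n).
Local Notation better_off := (better_off I).

Lemma better_off_assigned s : better_off m n s -> m s != None.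
Proof. by rewrite /better_off; case: (m s). Qed.

Lemma better_off_neq s : better_off m n s -> m s != n s.
Proof.
rewrite /better_off; case: (m s) => [p|] //; case: (n s) => [q|] // lt.
by apply: contraL lt => /eqP[->]; rewrite /sprefers ltnn.
Qed.

Lemma better_off_moved s p : better_off m n s -> m s = Some p -> n s != Some p.
Proof. by move=> /better_off_neq + ms; rewrite ms eq_sym. Qed.

Lemma better_off_asym s : better_off m n s -> ~~ better_off n m s.
Proof.
rewrite /better_off; case: (m s) => [p|]; case: (n s) => [q|] //.
by rewrite /sprefers => lt; rewrite -leqNgt ltnW.
Qed.

Lemma not_better_off_eq s : ~~ better_off m n s -> ~~ better_off n m s -> m s = n s.
Proof.
rewrite /better_off; case ms: (m s) => [p|]; case ns: (n s) => [q|] //.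
rewrite /sprefers -!leqNgt => le_qp le_pq.
have /andP[p_s _] := stable_acceptable stable_m ms.
have /andP[q_s _] := stable_acceptable stable_n ns.
have eq_pq : index p (spref I s) = index q (spref I s) by apply/eqP; rewrite eqn_leq le_pq.
by rewrite -(nth_index p p_s) eq_pq nth_index.
Qed.

Lemma better_off_outranked s p : better_off m n s -> m s = Some p -> outranked I n s p.
Proof.
move=> better ms; apply: (stable_outranked stable_n).
- exact: stable_acceptable stable_m _ _ ms.
- exact/eqP/(better_off_moved better ms).
- by move: better; rewrite /better_off ms; case: (n s).
Qed.

Lemma join_funC : join_fun I m n =1 join_fun I n m.
Proof.
move=> s; rewrite /join_fun.
have [better | not_better] := boolP (better_off m n s).
  by rewrite (negbTE (better_off_asym better)).
by case: ifP => // /negbT /(not_better_off_eq not_better).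
Qed.

End BetterOff.

Section Displacement.
Variables (S P L : finType) (I : SPAS S P L) (m n : S -> option P).
Hypotheses (stable_m : stable_fun I m) (stable_n : stable_fun I n).
Local Notation better_off := (better_off I).

(* Each of [s] and [u] is outranked at [p] by the other. *)
Lemma better_off_crossing s u p : better_off m n s -> m s = Some p ->
  better_off n m u -> n u = Some p -> False.
Proof.
move=> better_s ms better_u nu.
have u_above := outranked_pstudents (better_off_outranked stable_m stable_n better_s ms).
have s_above := outranked_pstudents (better_off_outranked stable_n stable_m better_u nu).
have := ltn_trans (u_above u _) (s_above s _).
by rewrite ltnn !in_pstudents ms nu eqxx => /(_ isT isT).
Qed.

Lemma better_off_displaced s p t : better_off m n s -> m s = Some p ->
  t \in pstudents n p -> t \notin pstudents m p -> better_off m n t.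
Proof.
move=> better_s ms t_np t_mp; apply: contraT => not_better_t.
have [better_t | not_better_t'] := boolP (better_off n m t).
  by move: t_np; rewrite in_pstudents => /eqP /(better_off_crossing better_s ms better_t).
move: t_mp; rewrite in_pstudents.
by rewrite (not_better_off_eq stable_m stable_n not_better_t not_better_t') -in_pstudents t_np.
Qed.

End Displacement.

Section Counting.
Variables (S P L : finType) (I : SPAS S P L) (m n : S -> option P).
Hypotheses (stable_m : stable_fun I m) (stable_n : stable_fun I n).
Local Notation lect := (offerer I).
Local Notation better_off := (better_off I).
Local Notation rank := (rank I).
Local Notation lstudents := (lstudents I).

Definition improvers := [set s | better_off m n s].

(* [l] turns an improver away from one of its projects that has room in [n];
   then [l] is full in [n] (see [rejectingP]). *)
Definition rejecting l := [exists s, if m s is Some p then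
  [&& better_off m n s, lect p == l & #|pstudents n p| < pcap I p] else false].

Lemma rejectingP l : rejecting l -> exists s,
  [/\ s \in lstudents m l, #|lstudents n l| = lcap I l &
      {in lstudents n l, forall t, rank l t < rank l s}].
Proof.
case/existsP=> s; case ms: (m s) => [p|] // /and3P[better /eqP <- under].
have [lfull _ above] := outranked_lfull (better_off_outranked stable_m stable_n better ms) under.
by exists s; rewrite in_lstudents ms.
Qed.

Lemma pfull_of_not_rejecting s p : ~~ rejecting (lect p) ->
  better_off m n s -> m s = Some p -> #|pstudents n p| = pcap I p.
Proof.
move=> not_rejecting better ms; apply/eqP; rewrite eqn_leq stable_pcap //= leqNgt.
by apply: contra not_rejecting => under; apply/existsP; exists s; rewrite ms better eqxx.
Qed.

Lemma lcap_of_rejecting l : rejecting l -> #|lstudents m l| <= #|lstudents n l|.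
Proof. by case/rejectingP=> s [_ -> _]; apply: stable_lcap. Qed.

Lemma improvers_leave p :
  pstudents m p :&: improvers \subset pstudents m p :\: pstudents n p.
Proof.
apply/subsetP=> s; rewrite !inE => /andP[/eqP ms better].
by rewrite ms eqxx (better_off_moved better ms).
Qed.

Lemma card_leaving_le s p : ~~ rejecting (lect p) -> better_off m n s -> m s = Some p ->
  #|pstudents m p :\: pstudents n p| <= #|pstudents n p :&: improvers|.
Proof.
move=> not_rejecting better ms.
have nfull := pfull_of_not_rejecting not_rejecting better ms.
have mcap := stable_pcap stable_m p.
have arrivals : pstudents n p :\: pstudents m p \subset pstudents n p :&: improvers.
  apply/subsetP=> t; rewrite !inE => /andP[t_m /eqP nt]; rewrite nt eqxx /=.
  by apply: (better_off_displaced stable_m stable_n better ms); rewrite in_pstudents ?nt.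
have := subset_leq_card arrivals.
have := cardsID (pstudents n p) (pstudents m p); have := cardsID (pstudents m p) (pstudents n p).
rewrite setIC; lia.
Qed.

Lemma card_pimprovers_le p : ~~ rejecting (lect p) ->
  #|pstudents m p :&: improvers| <= #|pstudents n p :&: improvers|.
Proof.
move=> not_rejecting; have [->|[s]] := set_0Vmem (pstudents m p :&: improvers).
  by rewrite cards0.
rewrite !inE => /andP[/eqP ms better].
exact: leq_trans (subset_leq_card (improvers_leave p)) (card_leaving_le not_rejecting better ms).
Qed.

Lemma decliner_project_full u q : rejecting (lect q) -> better_off n m u -> n u = Some q ->
  #|pstudents m q| = pcap I q /\ [disjoint pstudents m q & improvers].
Proof.
case/rejectingP=> s [s_m _ above] better_u nu; split.
  case: (better_off_outranked stable_n stable_m better_u nu) => [[]//|[_ _ _ above_u]].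
  have := ltn_trans (above_u s s_m) (above u _).
  by rewrite ltnn in_lstudents nu eqxx => /(_ isT).
rewrite disjoint_subset; apply/subsetP=> t t_m; rewrite !inE; apply/negP=> better_t.
have mt : m t = Some q by apply/eqP; rewrite -in_pstudents.
have t_n : t \notin pstudents n q by rewrite in_pstudents (better_off_moved better_t mt).
have := better_off_displaced stable_n stable_m better_u nu t_m t_n.
by apply/negP/better_off_asym.
Qed.

Lemma card_pnonimprovers_le q : rejecting (lect q) ->
  #|pstudents n q :\: improvers| <= #|pstudents m q :\: improvers|.
Proof.
move=> rej; have [/existsP[u /andP[u_n better_u]] | no_decliner] :=
  boolP [exists u, (n u == Some q) && better_off n m u].
  have [mfull /setDidPl ->] := decliner_project_full rej better_u (eqP u_n).
  by rewrite mfull (leq_trans (subset_leq_card (subsetDl _ _))) ?stable_pcap.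
apply/subset_leq_card/subsetP=> t; rewrite !inE => /andP[not_better t_n].
have not_better' : ~~ better_off n m t.
  by apply: contra no_decliner => better_t; apply/existsP; exists t; rewrite t_n.
by rewrite not_better (not_better_off_eq stable_m stable_n not_better not_better').
Qed.

Lemma card_limprovers_le l :
  #|lstudents m l :&: improvers| <= #|lstudents n l :&: improvers|.
Proof.
have [rej | not_rej] := boolP (rejecting l); last first.
  by rewrite !card_lstudentsI; apply: leq_sum => p /eqP lp; apply: card_pimprovers_le; rewrite lp.
have : #|lstudents n l :\: improvers| <= #|lstudents m l :\: improvers|.
  rewrite !card_lstudentsD; apply: leq_sum => q /eqP lq.
  by apply: card_pnonimprovers_le; rewrite lq.
have := lcap_of_rejecting rej.
have := cardsID improvers (lstudents m l); have := cardsID improvers (lstudents n l).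
lia.
Qed.

Lemma sum_card_limprovers : \sum_l #|lstudents m l :&: improvers| = #|improvers|.
Proof.
rewrite sum_card_lstudentsI; apply: eq_card => s; rewrite !inE.
exact/andb_idr/better_off_assigned.
Qed.

Lemma card_limprovers_eq l :
  #|lstudents m l :&: improvers| = #|lstudents n l :&: improvers|.
Proof.
apply: (@leq_sum_eq _ predT (fun k => #|lstudents m k :&: improvers|)
  (fun k => #|lstudents n k :&: improvers|)) => // [k _|].
  exact: card_limprovers_le.
rewrite sum_card_limprovers sum_card_lstudentsI.
by apply/subset_leq_card/subsetP=> s; rewrite inE => /andP[].
Qed.

Lemma improver_assigned s : better_off m n s -> n s != None.
Proof.
have all_assigned : #|[set t in improvers | n t != None]| = #|improvers|.
  rewrite -(sum_card_lstudentsI I) -sum_card_limprovers.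
  by apply: eq_bigr => l _; rewrite card_limprovers_eq.
have sub : [set t in improvers | n t != None] \subset improvers.
  by apply/subsetP=> t; rewrite inE => /andP[].
have := elimT (subset_cardP all_assigned) sub s.
by rewrite !inE => <- /andP[].
Qed.

Lemma card_pimprovers_eq p : ~~ rejecting (lect p) ->
  #|pstudents m p :&: improvers| = #|pstudents n p :&: improvers|.
Proof.
move=> not_rej.
apply: (@leq_sum_eq _ (fun q => lect q == lect p) (fun q => #|pstudents m q :&: improvers|)
  (fun q => #|pstudents n q :&: improvers|)) => //.
  by move=> q /eqP lq; apply: card_pimprovers_le; rewrite lq.
by rewrite -!card_lstudentsI card_limprovers_eq.
Qed.

Lemma card_pnonimprovers_eq q : rejecting (lect q) ->
  #|pstudents n q :\: improvers| = #|pstudents m q :\: improvers|.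
Proof.
move=> rej.
apply: (@leq_sum_eq _ (fun r => lect r == lect q) (fun r => #|pstudents n r :\: improvers|)
  (fun r => #|pstudents m r :\: improvers|)) => //.
  by move=> r /eqP lr; apply: card_pnonimprovers_le; rewrite lr.
rewrite -!card_lstudentsD.
have := lcap_of_rejecting rej; have := card_limprovers_eq (lect q).
have := cardsID improvers (lstudents m (lect q)); have := cardsID improvers (lstudents n (lect q)).
lia.
Qed.

Lemma improver_source t p : ~~ rejecting (lect p) -> better_off m n t -> n t = Some p ->
  exists2 s, better_off m n s & m s = Some p.
Proof.
move=> not_rej better_t nt.
have : 0 < #|pstudents m p :&: improvers|.
  by rewrite card_pimprovers_eq //; apply/card_gt0P; exists t; rewrite !inE nt eqxx.
by case/card_gt0P=> s; rewrite !inE => /andP[/eqP ms better]; exists s.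
Qed.

Lemma decliner_source u q : rejecting (lect q) -> better_off n m u -> m u = Some q ->
  exists2 u', better_off n m u' & n u' = Some q.
Proof.
move=> rej better_u mu.
have [/existsP[u' /andP[/eqP nu' better']] | no_decliner] :=
  boolP [exists u', (n u' == Some q) && better_off n m u']; first by exists u'.
have stayers : pstudents n q :\: improvers \proper pstudents m q :\: improvers.
  apply/properP; split.
    apply/subsetP=> t; rewrite !inE => /andP[not_better nt].
    have not_better' : ~~ better_off n m t.
      by apply: contra no_decliner => better_t; apply/existsP; exists t; rewrite nt.
    by rewrite not_better (not_better_off_eq stable_m stable_n not_better not_better') nt.
  exists u; first by rewrite !inE mu eqxx andbT; apply: contraL better_u; apply: better_off_asym.
  by rewrite !inE -mu (negbTE (better_off_neq better_u)) andbF.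
by have := proper_card stayers; rewrite card_pnonimprovers_eq // ltnn.
Qed.

(* Counting shows the improvers at [p] in [m] are exactly those leaving [p]. *)
Lemma not_rejecting_no_decliner s u p : ~~ rejecting (lect p) ->
  better_off m n s -> m s = Some p -> better_off n m u -> m u = Some p -> False.
Proof.
move=> not_rej better_s ms better_u mu.
have leaving := subset_leq_card (improvers_leave p).
have := card_leaving_le not_rej better_s ms; rewrite -card_pimprovers_eq // => arriving.
have eq_card : #|pstudents m p :&: improvers| = #|pstudents m p :\: pstudents n p|.
  by apply/eqP; rewrite eqn_leq leaving arriving.
have := elimT (subset_cardP eq_card) (improvers_leave p) u.
have nu : n u != Some p by rewrite -mu (better_off_neq better_u).
rewrite !inE mu eqxx nu /= => better_u'.
by move: better_u; rewrite (negbTE (better_off_asym better_u')).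
Qed.

Lemma rejecting_no_improver_arrives u t q : rejecting (lect q) ->
  better_off n m u -> n u = Some q -> better_off m n t -> n t = Some q -> False.
Proof.
move=> rej better_u nu better_t nt.
have [mfull /setDidPl mstay] := decliner_project_full rej better_u nu.
have eq_card : #|pstudents n q :\: improvers| = #|pstudents n q|.
  apply/eqP; rewrite eqn_leq subset_leq_card ?subsetDl //=.
  by rewrite card_pnonimprovers_eq // mstay mfull stable_pcap.
have := elimT (subset_cardP eq_card) (subsetDl _ _) t.
by rewrite !inE nt eqxx better_t.
Qed.

Lemma decliner_excludes_improvers u s p : better_off n m u -> m u = Some p ->
  better_off m n s -> (m s == Some p) || (n s == Some p) -> False.
Proof.
move=> better_u mu better_s /orP[/eqP ms | /eqP ns];
  have [rej | not_rej] := boolP (rejecting (lect p)).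
- have [u' better_u' nu'] := decliner_source rej better_u mu.
  exact: (better_off_crossing stable_m stable_n better_s ms better_u' nu').
- exact: not_rejecting_no_decliner not_rej better_s ms better_u mu.
- have [u' better_u' nu'] := decliner_source rej better_u mu.
  exact: rejecting_no_improver_arrives rej better_u' nu' better_s ns.
- have [s' better_s' ms'] := improver_source not_rej better_s ns.
  exact: not_rejecting_no_decliner not_rej better_s' ms' better_u mu.
Qed.

Lemma rejecting_excludes_nonimprover s l : rejecting l -> ~~ better_off m n s ->
  {in lstudents n l, forall t, rank l t < rank l s} -> s \notin lstudents m l.
Proof.
move=> rej not_better above; rewrite in_lstudents.
case ms: (m s) => [q|] //=; apply/negP=> /eqP[lq]; rewrite -lq in rej above.
have [better' | not_better'] := boolP (better_off n m s).
  have [u better_u nu] := decliner_source rej better' ms.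
  have s_above := outranked_pstudents (better_off_outranked stable_n stable_m better_u nu).
  have := ltn_trans (s_above s _) (above u _).
  by rewrite ltnn in_pstudents in_lstudents ms nu !eqxx => /(_ isT isT).
have := above s; rewrite ltnn in_lstudents.
by rewrite -(not_better_off_eq stable_m stable_n not_better not_better') ms eqxx => /(_ isT).
Qed.

End Counting.

Section Join.
Variables (S P L : finType) (I : SPAS S P L) (m n : S -> option P).
Hypotheses (stable_m : stable_fun I m) (stable_n : stable_fun I n).
Local Notation lect := (offerer I).
Local Notation better_off := (better_off I).
Local Notation rank := (rank I).
Local Notation lstudents := (lstudents I).
Local Notation join := (join_fun I m n).
Local Notation hosts_improver := (hosts_improver I).
Local Notation improvers := (improvers I m n).

Lemma no_mixed_project p : hosts_improver m n p -> ~~ hosts_improver n m p.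
Proof.
case/existsP=> s /andP[better_s s_p]; apply/existsP=> -[u /andP[better_u u_p]].
case/orP: u_p => [/eqP nu | /eqP mu]; last first.
  exact: (decliner_excludes_improvers stable_m stable_n better_u mu better_s s_p).
case/orP: s_p => [/eqP ms | /eqP ns].
  exact: (better_off_crossing stable_m stable_n better_s ms better_u nu).
apply: (decliner_excludes_improvers stable_n stable_m better_s ns better_u).
by rewrite nu eqxx.
Qed.

Lemma pstudents_joinr p :
  ~~ hosts_improver n m p -> pstudents join p = pstudents n p.
Proof.
by rewrite (eq_pstudents _ (join_funC stable_m stable_n)); apply: pstudents_join.
Qed.

Lemma card_pstudents_join_le p : #|pstudents join p| <= pcap I p.
Proof.
have [/no_mixed_project/pstudents_joinr -> | /pstudents_join ->] :=
  boolP (hosts_improver m n p); exact: stable_pcap.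
Qed.

Lemma card_lstudents_join l : #|lstudents join l| = #|lstudents m l|.
Proof.
have improvers_n : lstudents join l :&: improvers = lstudents n l :&: improvers.
  by apply/setP=> s; rewrite !inE /join_fun; case: (better_off m n s); rewrite ?andbF.
have others_m : lstudents join l :\: improvers = lstudents m l :\: improvers.
  by apply/setP=> s; rewrite !inE /join_fun; case: (better_off m n s).
rewrite -(cardsID improvers (lstudents join l)) improvers_n others_m.
by rewrite -(card_limprovers_eq stable_m stable_n) cardsID.
Qed.

Lemma rank_join l s : {in lstudents m l, forall t, rank l t < rank l s} ->
  {in lstudents join l, forall t, rank l t < rank l s}.
Proof.
move=> above t; rewrite in_lstudents /join_fun.
case: ifP => [better | _]; last by rewrite -in_lstudents; apply: above.
case nt: (n t) => [q|] //= /eqP[lq]; rewrite -lq in above *.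
have [rej | not_rej] := boolP (rejecting I m n (lect q)).
  have [s' [s'_m _ above']] := rejectingP stable_m stable_n rej.
  by apply: ltn_trans (above _ s'_m); apply: above'; rewrite in_lstudents nt.
have [s' better' ms'] := improver_source stable_m stable_n not_rej better nt.
have t_above := outranked_pstudents (better_off_outranked stable_m stable_n better' ms').
apply: ltn_trans (t_above t _) (above s' _); by rewrite ?in_pstudents ?in_lstudents ?ms' ?nt.
Qed.

End Join.

Section JoinStable.
Variables (S P L : finType) (I : SPAS S P L) (m n : S -> option P).
Hypotheses (stable_m : stable_fun I m) (stable_n : stable_fun I n).
Local Notation lect := (offerer I).
Local Notation better_off := (better_off I).
Local Notation rank := (rank I).
Local Notation lstudents := (lstudents I).
Local Notation join := (join_fun I m n).

Lemma card_lstudents_joinr l : #|lstudents join l| = #|lstudents n l|.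
Proof.
by rewrite (eq_lstudents _ _ (join_funC stable_m stable_n)) card_lstudents_join.
Qed.

Lemma rank_joinr l s : {in lstudents n l, forall t, rank l t < rank l s} ->
  {in lstudents join l, forall t, rank l t < rank l s}.
Proof.
by rewrite (eq_lstudents _ _ (join_funC stable_m stable_n)); apply: rank_join.
Qed.

Lemma join_outranked_improver s s' p : ~~ better_off m n s ->
  hosts_improver I m n p -> better_off m n s' -> m s' = Some p ->
  rank (lect p) s' < rank (lect p) s -> outranked I join s p.
Proof.
move=> not_better host better' ms' below.
have pjoin := pstudents_joinr stable_m stable_n (no_mixed_project stable_m stable_n host).
have out' := better_off_outranked stable_m stable_n better' ms'.
have [nfull | under] := boolP (#|pstudents n p| == pcap I p).
  left; rewrite pjoin (eqP nfull); split=> // t /(outranked_pstudents out') t_above.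
  exact: ltn_trans below.
have {}under : #|pstudents n p| < pcap I p by rewrite ltn_neqAle under stable_pcap.
have [lfull _ above'] := outranked_lfull out' under.
have above t : t \in lstudents n (lect p) -> rank (lect p) t < rank (lect p) s.
  by move/above'/ltn_trans; apply.
apply: outranked_of_lfull (card_pstudents_join_le stable_m stable_n p) _ _ (rank_joinr above).
  by rewrite card_lstudents_joinr.
have rej : rejecting I m n (lect p).
  by apply/existsP; exists s'; rewrite ms' better' eqxx under.
have := rejecting_excludes_nonimprover stable_m stable_n rej not_better above.
by rewrite !in_lstudents /join_fun (negbTE not_better).
Qed.

Lemma join_outranked_pfull s p : ~~ better_off m n s ->
  #|pstudents m p| = pcap I p ->
  {in pstudents m p, forall t, rank (lect p) t < rank (lect p) s} ->
  outranked I join s p.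
Proof.
move=> not_better mfull above.
have [host | no_host] := boolP (hosts_improver I m n p); last first.
  by left; rewrite pstudents_join.
have [/existsP[s' /andP[better' /eqP ms']] | no_improver] :=
  boolP [exists s', better_off m n s' && (m s' == Some p)].
  by apply: (join_outranked_improver not_better host better' ms'); apply: above;
    rewrite in_pstudents ms'.
have no_decliner := no_mixed_project stable_m stable_n host.
have stay : pstudents m p \subset pstudents n p.
  apply/subsetP=> t; rewrite !in_pstudents => /eqP mt.
  have not_better_t : ~~ better_off m n t.
    by apply: contra no_improver => better_t; apply/existsP; exists t; rewrite better_t mt eqxx.
  have not_better_t' : ~~ better_off n m t.
    apply: contra no_decliner => better_t; apply/existsP; exists t.
    by rewrite better_t mt eqxx orbT.
  by rewrite -(not_better_off_eq stable_m stable_n not_better_t not_better_t') mt.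
have eq_card : #|pstudents m p| = #|pstudents n p|.
  by apply/eqP; rewrite eqn_leq subset_leq_card //= mfull stable_pcap.
left; rewrite pstudents_joinr // -eq_card; split=> // t t_n; apply: above.
by rewrite (elimT (subset_cardP eq_card) stay t).
Qed.

Lemma join_outranked s p : ~~ better_off m n s -> acceptable I s p -> m s <> Some p ->
  sprefers_opt I s p (m s) -> outranked I join s p.
Proof.
move=> not_better acc ms pref.
have join_s : join s = m s by rewrite /join_fun (negbTE not_better).
case: (stable_outranked stable_m acc ms pref) => [[mfull above] | [_ lfull s_l above]].
  exact: join_outranked_pfull.
have := rank_join stable_m stable_n above.
apply: outranked_of_lfull (card_pstudents_join_le stable_m stable_n p) _ _.
  by rewrite card_lstudents_join.
by rewrite in_lstudents join_s -in_lstudents.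
Qed.

End JoinStable.

Lemma join_fun_stable (S P L : finType) (I : SPAS S P L) (m n : S -> option P) :
  stable_fun I m -> stable_fun I n -> stable_fun I (join_fun I m n).
Proof.
move=> stable_m stable_n; split.
- move=> s p; rewrite /join_fun; case: ifP => _; exact: stable_acceptable.
- exact: card_pstudents_join_le.
- by move=> l; rewrite card_lstudents_join // stable_lcap.
- move=> s p; have [better | not_better] := boolP (better_off I m n s).
    have join_s : join_fun I m n s = n s by rewrite /join_fun better.
    rewrite join_s (eq_outranked _ _ _ (join_funC stable_m stable_n)).
    exact: join_outranked (better_off_asym better).
  have join_s : join_fun I m n s = m s by rewrite /join_fun (negbTE not_better).
  by rewrite join_s; apply: join_outranked.
Qed.

Section Matchings.
Variables (S P L : finType) (I : SPAS S P L).
Local Notation lect := (offerer I).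
Local Notation rank := (rank I).
Implicit Types (M : {set S * P}) (s : S) (p : P) (l : L) (X : {set S}).

Section SingleValued.
Variables (M : {set S * P}).
Hypothesis single : forall s, #|[set p | (s, p) \in M]| <= 1.

Lemma mem_Ms s p : ((s, p) \in M) = (Ms M s == Some p).
Proof.
rewrite /Ms; case: pickP => [q sq | none]; last by rewrite none.
apply/idP/eqP=> [sp | [<-] //]; congr Some.
by apply: (card_le1_eqP (single s)); rewrite inE.
Qed.

Lemma Mp_pstudents p : Mp M p = pstudents (Ms M) p.
Proof. by apply/setP=> s; rewrite !inE mem_Ms. Qed.

Lemma Ml_lstudents l : Ml I M l = lstudents I (Ms M) l.
Proof.
apply/setP=> s; rewrite !inE; apply/existsP/eqP=> [[p /andP[]] | ].
  by rewrite mem_Ms => /eqP -> /eqP <-.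
by case ms: (Ms M s) => [p|] //= [lp]; exists p; rewrite mem_Ms ms lp !eqxx.
Qed.

End SingleValued.

Lemma not_prefers_to_worst_rank l s X : s \in lpref I l -> s \notin X ->
  ~~ prefers_to_worst I l s X -> {in X, forall t, rank l t < rank l s}.
Proof.
move=> s_l s_X not_pref t t_X; rewrite ltn_neqAle; apply/andP; split.
  by apply: contraNneq s_X => /(rank_inj s_l) <-.
move: not_pref; rewrite /prefers_to_worst /worst.
case: pickP => [w /andP[_ /forall_inP w_worst] | none].
  by rewrite /lprefers -leqNgt; apply/leq_trans/w_worst.
have [w w_X w_max] := @arg_maxnP _ t (mem X) (fun x => rank l x) t_X.
have w_X' : w \in X := w_X.
have w_worst : [forall u in X, rank l u <= rank l w] by apply/forall_inP=> u /w_max.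
by have := none w; rewrite /= w_X' w_worst.
Qed.

Lemma not_prefers_to_worst l s X :
  {in X, forall t, rank l t < rank l s} -> ~~ prefers_to_worst I l s X.
Proof.
move=> above; rewrite /prefers_to_worst /worst.
by case: pickP => [w /andP[w_X _] | //]; rewrite /lprefers -leqNgt ltnW ?above.
Qed.

Lemma stable_fun_Ms M : stable I M -> stable_fun I (Ms M).
Proof.
case=> [[acc single cap_p cap_l] no_block]; split.
- by move=> s p ms; apply: (acc (s, p)); rewrite mem_Ms ?ms.
- by move=> p; rewrite -Mp_pstudents.
- by move=> l; rewrite -Ml_lstudents.
move=> s p acc_sp ms pref; have s_l : s \in lpref I (lect p) by case/andP: acc_sp.
have := no_block s p.
rewrite /blocks acc_sp mem_Ms // (introF eqP ms) -/(sprefers_opt I s p (Ms M s)) pref /=.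
rewrite Mp_pstudents // Ml_lstudents //.
have := cap_p p; have := cap_l (lect p); rewrite Mp_pstudents // Ml_lstudents //.
rewrite leq_eqVlt => /orP[/eqP lfull | lunder]; rewrite leq_eqVlt => /orP[/eqP pfull | punder].
- rewrite pfull lfull ltnn !eqxx /= => not_pref; left; split=> //.
  by apply: not_prefers_to_worst_rank => //; rewrite in_pstudents; apply/eqP.
- rewrite punder lfull !eqxx ltnn (ltn_eqF punder) /= orbF => /norP[s_nl not_pref].
  by right; split=> //; apply: not_prefers_to_worst_rank.
- rewrite pfull !eqxx ltnn /= => not_pref; left; split=> //.
  by apply: not_prefers_to_worst_rank => //; rewrite in_pstudents; apply/eqP.
- by rewrite punder lunder.
Qed.

Lemma stable_of_fun M f : (forall s p, ((s, p) \in M) = (f s == Some p)) ->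
  stable_fun I f -> stable I M.
Proof.
move=> M_f [acc cap_p cap_l outr].
have single s : #|[set p | (s, p) \in M]| <= 1.
  by apply/card_le1_eqP=> p q; rewrite !inE !M_f => /eqP -> /eqP [].
have Ms_f : Ms M =1 f.
  move=> s; case fs: (f s) => [p|]; first by apply/eqP; rewrite -mem_Ms // M_f fs.
  by rewrite /Ms; case: pickP => // p; rewrite M_f fs.
split; first split=> // [[s p]|p|l].
- by rewrite M_f => /eqP; apply: acc.
- by rewrite Mp_pstudents // (eq_pstudents _ Ms_f).
- by rewrite Ml_lstudents // (eq_lstudents _ _ Ms_f).
move=> s p; rewrite /blocks M_f Ms_f Mp_pstudents // Ml_lstudents //.
rewrite (eq_pstudents _ Ms_f) (eq_lstudents _ _ Ms_f).
have [acc_sp | //] := boolP (acceptable I s p); have [// | fs] := eqVneq (f s) (Some p).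
rewrite -/(sprefers_opt I s p (f s)); have [pref | //] := boolP (sprefers_opt I s p (f s)).
case: (outr s p acc_sp (elimN eqP fs) pref) => [[pfull above] | [punder lfull s_nl above]].
  by rewrite pfull ltnn eqxx /= not_prefers_to_worst.
by rewrite punder lfull ltnn eqxx (negbTE s_nl) (negbTE (not_prefers_to_worst above)) ltn_eqF.
Qed.

(* [join_fun] differs from [vee_student] only on students assigned in [M] but
   not in [M'], and [improver_assigned] rules these out. *)
Lemma mem_join M M' : stable I M -> stable I M' ->
  forall s p, ((s, p) \in join I M M') = (join_fun I (Ms M) (Ms M') s == Some p).
Proof.
move=> /stable_fun_Ms stable_M /stable_fun_Ms stable_M' s p.
rewrite inE /= /vee_student /join_fun /better_off.
case ms: (Ms M s) => [q|]; case ms': (Ms M' s) => [q'|] //.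
- by case: (sprefers I s q q').
- have /(improver_assigned stable_M stable_M') : better_off I (Ms M) (Ms M') s.
    by rewrite /better_off ms ms'.
  by rewrite ms'.
- have /(improver_assigned stable_M' stable_M) : better_off I (Ms M') (Ms M) s.
    by rewrite /better_off ms ms'.
  by rewrite ms.
Qed.

End Matchings.

Theorem lemma12 (S P L : finType) (I : SPAS S P L) (M M' : {set S * P}) :
  wf_SPAS I -> stable I M -> stable I M' -> stable I (join I M M').
Proof.
move=> _ stable_M stable_M'.
apply: (stable_of_fun (mem_join stable_M stable_M')).
exact: join_fun_stable (stable_fun_Ms stable_M) (stable_fun_Ms stable_M').
Qed.
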